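(* Let $m,n$ be positive integers. Let $A, X$ be real symmetric $m\times m$ matrices and let $S_0,S_1,\ldots,S_{n-1},T$ be real symmetric $n\times n$ matrices such that \begin{itemize} \item $A\circ X = I_m\circ X = 0$ and $AX-XA=0$; \item $S_iT-TS_i=0$ for $i=0,1,\ldots,n-1$, and $S_i\circ T=0$ for $i=2,\ldots,n-1$. \end{itemize} Then the $mn\times mn$ matrices $\hat A=\sum_{j=0}^{n-1}(S_j\otimes A^j)$ (with $A^0=I_m$) and $\hat X=T\otimes X$ satisfy \[\hat A\circ \hat X = I_{mn}\circ \hat X = 0 \quad\text{and}\quad \hat A\hat X-\hat X\hat A=0.\]
   Context: $\circ$ denotes the entrywise (Hadamard) product and $\otimes$ the Kronecker product: for $P=(p_{ij})$, $P\otimes Q$ is the block matrix whose $(i,j)$ block is $p_{ij}Q$. $I_k$ is the $k\times k$ identity matrix. *)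

From mathcomp Require Import all_boot all_order all_algebra.
From mathcomp Require Export mxtens.
Set Implicit Arguments. Unset Strict Implicit. Unset Printing Implicit Defensive.
Import GRing.Theory Num.Theory.
Local Open Scope ring_scope.

Definition hadamard {R : pzRingType} {m n : nat} (A B : 'M[R]_(m, n)) : 'M[R]_(m, n) :=
  \matrix_(i, j) (A i j * B i j).

From mathcomp Require Import all_boot all_order all_algebra mxtens.
Import GRing.Theory Num.Theory.
Local Open Scope ring_scope.

(* Both the Hadamard product and the matrix product are multiplicative on
   Kronecker products: (P ⊗ Q) ∘ (P' ⊗ Q') = (P ∘ P') ⊗ (Q ∘ Q') and
   (P ⊗ Q)(P' ⊗ Q') = PP' ⊗ QQ'.  Hence Â ∘ X̂ = Σ_j (S_j ∘ T) ⊗ (A^j ∘ X),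
   where every term vanishes: A^0 ∘ X = I ∘ X = 0, A ∘ X = 0, and S_j ∘ T = 0
   for j >= 2.  Writing I_{mn} = I_n ⊗ I_m gives I ∘ X̂ = (I ∘ T) ⊗ (I ∘ X) = 0,
   and X̂ commutes with each S_j ⊗ A^j because T commutes with S_j and X with
   A^j. *)

Lemma hadamard_suml (R : pzRingType) m n (I : Type) (r : seq I) (P : pred I)
    (F : I -> 'M[R]_(m, n)) (B : 'M[R]_(m, n)) :
  hadamard (\sum_(i <- r | P i) F i) B = \sum_(i <- r | P i) hadamard (F i) B.
Proof.
apply/matrixP=> i j; rewrite !mxE !summxE mulr_suml.
by apply: eq_bigr => k _; rewrite mxE.
Qed.

Lemma hadamard_tensmx (R : comPzRingType) m n p q
    (P P' : 'M[R]_(m, n)) (Q Q' : 'M[R]_(p, q)) :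
  hadamard (P *t Q) (P' *t Q') = hadamard P P' *t hadamard Q Q'.
Proof. by apply/matrixP=> i j; rewrite !mxE mulrACA. Qed.

Lemma tensmx1 (R : pzRingType) m n :
  (1%:M : 'M[R]_m) *t (1%:M : 'M[R]_n) = 1%:M.
Proof.
apply/matrixP=> x y.
case: (mxtens_indexP x) => i j; case: (mxtens_indexP y) => k l.
by rewrite tensmxE !mxE (can_eq (@mxtens_indexK _ _)) xpair_eqE -natrM mulnb.
Qed.

Lemma comm_mx_tensmx (R : comPzRingType) m n
    (P P' : 'M[R]_m) (Q Q' : 'M[R]_n) :
  comm_mx P P' -> comm_mx Q Q' -> comm_mx (P *t Q) (P' *t Q').
Proof. by rewrite /comm_mx !tensmx_mul => -> ->. Qed.

Lemma comm_mx_subr_eq0 (R : pzRingType) n (P Q : 'M[R]_n) :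
  comm_mx P Q <-> P *m Q - Q *m P = 0.
Proof.
by rewrite /comm_mx; split=> [->|/eqP]; rewrite ?subrr // subr_eq0 => /eqP.
Qed.

Theorem lemma2p2 (R : realFieldType) (m' n' : nat)
  (A X : 'M[R]_m'.+1) (S : 'I_n'.+1 -> 'M[R]_n'.+1) (T : 'M[R]_n'.+1) :
  A^T = A -> X^T = X -> (forall i, (S i)^T = S i) -> T^T = T ->
  hadamard A X = 0 -> hadamard 1%:M X = 0 -> A *m X - X *m A = 0 ->
  (forall i, S i *m T - T *m S i = 0) ->
  (forall i : 'I_n'.+1, (2 <= i)%N -> hadamard (S i) T = 0) ->
  let Ahat := \sum_(j < n'.+1) (S j *t A ^+ j) in
  let Xhat := T *t X in
  hadamard Ahat Xhat = 0 /\ hadamard 1%:M Xhat = 0 /\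
  Ahat *m Xhat - Xhat *m Ahat = 0.
Proof.
move=> _ _ _ _ hAX h1X /comm_mx_subr_eq0 cAX cST hST Ahat Xhat.
split; [|split].
- rewrite hadamard_suml big1 // => -[[|[|j]] lt_j] _; rewrite hadamard_tensmx /=.
  + by rewrite expr0 h1X tensmx0.
  + by rewrite expr1 hAX tensmx0.
  + by rewrite (hST (Ordinal lt_j)) ?tens0mx.
- by rewrite -tensmx1 hadamard_tensmx h1X tensmx0.
- apply/comm_mx_subr_eq0/comm_mx_sym/comm_mx_sum => j _.
  apply: comm_mx_tensmx; first exact/comm_mx_sym/comm_mx_subr_eq0.
  exact/commrX/comm_mx_sym.
Qed.
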